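(* Let $I\subseteq\mathbb{R}$ be an open interval and let $f$ be a non-constant real analytic function on $I$ with $f(\mathbb{Q}\cap I)\subseteq\mathbb{Q}$. Assume there exists $\eta\in\mathbb{R}$ such that whenever $p/q\in I$ with $\gcd(p,q)=1$, $q\geq 2$, and $f(p/q)=p'/q'$ with $\gcd(p',q')=1$, one has $q'\leq q^{\eta}$. Then $f(\mathscr{L}\cap I)\subseteq\mathscr{L}$.
   Context: $\mathscr{L}$ denotes the set of Liouville numbers: real irrational numbers $\zeta$ such that for every $\eta>0$ the inequality $|\zeta-y/x|\leq x^{-\eta}$ has infinitely many rational solutions $y/x$ with $x\geq 1$. Fractions are written with positive denominators. *)

From Stdlib Require Import Reals ZArith List.
From Coquelicot Require Import Coquelicot.
Open Scope R_scope.

Definition in_interval (a b : Rbar) (x : R) : Prop :=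
  Rbar_lt a (Finite x) /\ Rbar_lt (Finite x) b.

Definition is_rational (x : R) : Prop :=
  exists p q : Z, (0 < q)%Z /\ x = IZR p / IZR q.

Definition real_analytic_on (a b : Rbar) (f : R -> R) : Prop :=
  forall x0, in_interval a b x0 ->
    exists (r : R) (c : nat -> R), 0 < r /\
      forall y, Rabs (y - x0) < r -> is_pseries c (y - x0) (f y).

Definition infinitely_many {T : Type} (P : T -> Prop) : Prop :=
  forall l : list T, exists t, P t /\ ~ In t l.

Definition Liouville (zeta : R) : Prop :=
  ~ is_rational zeta /\
  forall eta : R, 0 < eta ->
    infinitely_many (fun yx : Z * Z =>
      (1 <= snd yx)%Z /\
      Rabs (zeta - IZR (fst yx) / IZR (snd yx)) <= Rpower (IZR (snd yx)) (- eta)).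

From Stdlib Require Import Reals ZArith List Lra Lia Classical.
From Coquelicot Require Import Coquelicot.
Open Scope R_scope.

(* Let z be a Liouville number in I. A Liouville approximation y/x of z,
   reduced to p/q with q <= x, is sent by f to a rational p'/q' with
   q' <= q^eta <= x^eta, and since f is locally Lipschitz at z,
   |f z - p'/q'| <= C |z - p/q| <= C x^-mu for arbitrary mu. Taking mu large
   compared to eta gives Liouville approximations of f z. The same estimates
   show that f z is irrational: if f z = A/B, every f(p/q) /= f z would lie at
   distance at least 1/(B q') >= 1/(B x^eta) from it, so f(p/q) = f z at
   points accumulating at z, and by the identity theorem f would be constant. *)

Definition level_clusters_at (g : R -> R) (v x0 : R) : Prop :=
  forall d, 0 < d -> exists y, 0 < Rabs (y - x0) < d /\ g y = v.

Lemma continuity_pt_eps g x : continuity_pt g x ->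
  forall eps, 0 < eps -> exists d, 0 < d /\
    forall y, Rabs (y - x) < d -> Rabs (g y - g x) < eps.
Proof.
  intros g_cont eps eps_pos.
  destruct (g_cont eps eps_pos) as [d [d_pos close]].
  exists d; split; [lra|]; intros y y_close.
  destruct (Req_dec y x) as [->|y_ne].
  - rewrite Rminus_diag, Rabs_R0; lra.
  - apply close; split; [now split | exact y_close].
Qed.

Lemma continuity_pt_level g v x :
  continuity_pt g x -> level_clusters_at g v x -> g x = v.
Proof.
  intros g_cont clusters.
  destruct (Req_dec (g x) v) as [|ne]; [assumption | exfalso].
  destruct (continuity_pt_eps g x g_cont (Rabs (v - g x))) as [d [d_pos close]].
  { apply Rabs_pos_lt; lra. }
  destruct (clusters d d_pos) as [y [[_ y_close] gy]].
  specialize (close y y_close); rewrite gy in close; lra.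
Qed.

Lemma continuity_pt_locally_bounded g x : continuity_pt g x ->
  exists M d, 0 < M /\ 0 < d /\ forall y, Rabs (y - x) < d -> Rabs (g y) <= M.
Proof.
  intros g_cont.
  destruct (continuity_pt_eps g x g_cont 1 Rlt_0_1) as [d [d_pos close]].
  exists (Rabs (g x) + 1), d; split; [pose proof (Rabs_pos (g x)); lra|].
  split; [exact d_pos|]; intros y y_close.
  specialize (close y y_close).
  pose proof (Rabs_triang_inv (g y) (g x)); lra.
Qed.

Lemma CV_radius_decr_n (c : nat -> R) k : CV_radius (PS_decr_n c k) = CV_radius c.
Proof.
  induction k as [|k IH]; simpl.
  - now apply CV_radius_ext.
  - rewrite <- IH, <- (CV_radius_decr_1 (PS_decr_n c k)).
    apply CV_radius_ext; intro n; unfold PS_decr_n, PS_decr_1; f_equal; lia.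
Qed.

Lemma PSeries_decr_n_0 (c : nat -> R) k : PSeries (PS_decr_n c k) 0 = c k.
Proof. rewrite PSeries_0; unfold PS_decr_n; f_equal; lia. Qed.

Lemma PSeries_decr_n_continuity (c : nat -> R) k : Rbar_lt 0 (CV_radius c) ->
  continuity_pt (PSeries (PS_decr_n c k)) 0.
Proof.
  intros radius_pos; apply PSeries_continuity.
  now rewrite CV_radius_decr_n, Rabs_R0.
Qed.

Lemma sum_f_R0_low_vanish (c : nat -> R) h n :
  (forall m, (1 <= m <= n)%nat -> c m = 0) ->
  sum_f_R0 (fun k => c k * h ^ k) n = c 0%nat.
Proof.
  induction n as [|n IH]; intros low; simpl; [ring|].
  rewrite IH by (intros; apply low; lia).
  rewrite (low (S n)) by lia; ring.
Qed.

Section Local_expansion.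

Variables (f : R -> R) (x0 r : R) (c : nat -> R).
Hypothesis r_pos : 0 < r.
Hypothesis f_expansion :
  forall y, Rabs (y - x0) < r -> is_pseries c (y - x0) (f y).

(* Convergence at a point farther out forces the terms to vanish there. *)
Lemma expansion_in_radius h : Rabs h < r -> Rbar_lt (Rabs h) (CV_radius c).
Proof.
  intros h_lt.
  set (h' := (Rabs h + r) / 2).
  assert (h'_abs : Rabs h' = h')
    by (apply Rabs_pos_eq; unfold h'; pose proof (Rabs_pos h); lra).
  enough (Rbar_le h' (CV_radius c))
    by (eapply Rbar_lt_le_trans; [|eassumption]; simpl; unfold h'; lra).
  apply Rbar_not_lt_le; intro outside.
  rewrite <- h'_abs in outside; apply (CV_disk_outside c h' outside).
  assert (conv := f_expansion (x0 + h')).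
  replace (x0 + h' - x0) with h' in conv by ring.
  specialize (conv ltac:(rewrite h'_abs; unfold h'; lra)).
  apply ex_series_lim_0; exists (f (x0 + h')).
  eapply is_series_ext; [|exact conv]; intro n.
  now rewrite pow_n_pow, Rmult_comm.
Qed.

Lemma expansion_radius_pos : Rbar_lt 0 (CV_radius c).
Proof. rewrite <- Rabs_R0; apply expansion_in_radius; rewrite Rabs_R0; lra. Qed.

Lemma expansion_eq y : Rabs (y - x0) < r -> f y = PSeries c (y - x0).
Proof. intros y_close; symmetry; now apply is_pseries_unique, f_expansion. Qed.

Lemma expansion_decr_n y k : Rabs (y - x0) < r ->
  f y = sum_f_R0 (fun m => c m * (y - x0) ^ m) k
        + (y - x0) ^ S k * PSeries (PS_decr_n c (S k)) (y - x0).
Proof.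
  intros y_close; rewrite expansion_eq by exact y_close.
  apply PSeries_decr_n, CV_radius_inside, expansion_in_radius, y_close.
Qed.

Lemma expansion_lipschitz : exists C, 0 < C /\ exists d, 0 < d /\
  forall y, Rabs (y - x0) < d -> Rabs (f y - f x0) <= C * Rabs (y - x0).
Proof.
  destruct (continuity_pt_locally_bounded _ 0
              (PSeries_decr_n_continuity c 1 expansion_radius_pos))
    as [M [d [M_pos [d_pos bounded]]]].
  exists M; split; [exact M_pos|]; exists (Rmin d r); split; [now apply Rmin_pos|].
  intros y y_close; pose proof (Rmin_l d r); pose proof (Rmin_r d r).
  rewrite (expansion_decr_n y 0) by lra.
  rewrite (expansion_decr_n x0 0) by (rewrite Rminus_diag, Rabs_R0; lra).
  rewrite Rminus_diag; simpl.
  replace (c 0%nat * 1 + (y - x0) * 1 * PSeries (PS_decr_n c 1) (y - x0)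
           - (c 0%nat * 1 + 0 * 1 * PSeries (PS_decr_n c 1) 0))
    with ((y - x0) * PSeries (PS_decr_n c 1) (y - x0)) by ring.
  rewrite Rabs_mult, Rmult_comm; apply Rmult_le_compat_r; [apply Rabs_pos|].
  apply bounded; rewrite Rminus_0_r; lra.
Qed.

Section Level.

Variable v : R.
Hypothesis f_clusters : level_clusters_at f v x0.

Lemma expansion_level_clusters : level_clusters_at (PSeries c) v 0.
Proof.
  intros d d_pos.
  destruct (f_clusters (Rmin d r) (Rmin_pos _ _ d_pos r_pos)) as [y [[y_ne y_close] fy]].
  pose proof (Rmin_l d r); pose proof (Rmin_r d r).
  exists (y - x0); rewrite Rminus_0_r; split; [lra|].
  now rewrite <- expansion_eq, fy by lra.
Qed.

Lemma expansion_level_center : c 0%nat = v.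
Proof.
  rewrite <- PSeries_0; apply continuity_pt_level; [|exact expansion_level_clusters].
  apply PSeries_continuity; rewrite Rabs_R0; exact expansion_radius_pos.
Qed.

(* If c_1, ..., c_k vanish, then f - v = h^(k+1) T(h) with T continuous and
   T(0) = c_(k+1); T vanishes wherever f = v off x0, hence at 0. *)
Lemma expansion_coef_vanish n : (1 <= n)%nat -> c n = 0.
Proof.
  intros n_pos.
  enough (low : forall k m, (1 <= m <= k)%nat -> c m = 0) by (apply (low n); lia).
  induction k as [|k IH]; intros m m_range; [lia|].
  destruct (Nat.eq_dec m (S k)) as [->|]; [|apply IH; lia].
  rewrite <- PSeries_decr_n_0.
  apply continuity_pt_level; [exact (PSeries_decr_n_continuity c _ expansion_radius_pos)|].
  intros d d_pos.
  destruct (f_clusters (Rmin d r) (Rmin_pos _ _ d_pos r_pos)) as [y [[y_ne y_close] fy]].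
  pose proof (Rmin_l d r); pose proof (Rmin_r d r).
  exists (y - x0); rewrite Rminus_0_r; split; [lra|].
  pose proof (expansion_decr_n y k ltac:(lra)) as decomposition.
  rewrite sum_f_R0_low_vanish, fy, expansion_level_center in decomposition
    by (intros; apply IH; lia).
  assert (pow_ne : (y - x0) ^ S k <> 0)
    by (apply pow_nonzero; intro E; rewrite E, Rabs_R0 in y_ne; lra).
  apply (Rmult_eq_reg_l ((y - x0) ^ S k)); [lra | exact pow_ne].
Qed.

Lemma expansion_locally_level y : Rabs (y - x0) < r -> f y = v.
Proof.
  intros y_close; rewrite (expansion_decr_n y 0) by exact y_close; simpl.
  rewrite (PSeries_ext _ (fun _ => 0)), PSeries_const_0, expansion_level_center by
    (intro n; apply expansion_coef_vanish; unfold PS_decr_n; lia).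
  ring.
Qed.

End Level.

End Local_expansion.

Lemma in_interval_convex a b x y w : in_interval a b x -> in_interval a b y ->
  0 <= w <= 1 -> in_interval a b (x + w * (y - x)).
Proof.
  unfold in_interval; intros [xa xb] [ya yb] w_range.
  destruct a as [a| |]; destruct b as [b| |]; simpl in *; try tauto;
    split; try exact I;
    first [ assert (0 <= (1 - w) * (x - a)) by (apply Rmult_le_pos; lra);
            assert (0 <= w * (y - a)) by (apply Rmult_le_pos; lra); nra
          | assert (0 <= (1 - w) * (b - x)) by (apply Rmult_le_pos; lra);
            assert (0 <= w * (b - y)) by (apply Rmult_le_pos; lra); nra ].
Qed.

Lemma in_interval_open a b x : in_interval a b x ->
  exists d, 0 < d /\ forall y, Rabs (y - x) < d -> in_interval a b y.
Proof.
  unfold in_interval; intros [xa xb].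
  assert (above_a : exists da, 0 < da /\ forall y, Rabs (y - x) < da -> Rbar_lt a y).
  { destruct a as [a| |]; simpl in *; try tauto.
    - exists (x - a); split; [lra|]; intros y y_close; apply Rabs_def2 in y_close; lra.
    - exists 1; split; [lra | intros; exact I]. }
  assert (below_b : exists db, 0 < db /\ forall y, Rabs (y - x) < db -> Rbar_lt y b).
  { destruct b as [b| |]; simpl in *; try tauto.
    - exists (b - x); split; [lra|]; intros y y_close; apply Rabs_def2 in y_close; lra.
    - exists 1; split; [lra | intros; exact I]. }
  destruct above_a as [da [da_pos Ha]], below_b as [db [db_pos Hb]].
  exists (Rmin da db); split; [now apply Rmin_pos|].
  intros y y_close; pose proof (Rmin_l da db); pose proof (Rmin_r da db).
  split; [apply Ha | apply Hb]; lra.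
Qed.

(* Continuous induction on [0, 1]: the supremum of the initial segments on
   which P holds can be neither below 1 nor 1 without P holding up to it. *)
Lemma real_induction (P : R -> Prop) :
  (forall s, 0 <= s <= 1 -> (forall w, 0 <= w < s -> P w) ->
     exists e, 0 < e /\ forall w, 0 <= w < s + e -> P w) ->
  forall w, 0 <= w <= 1 -> P w.
Proof.
  intros step.
  set (T := fun u => 0 <= u <= 1 /\ forall w, 0 <= w < u -> P w).
  assert (T0 : T 0) by (split; [lra | intros; lra]).
  assert (T_bounded : bound T) by (exists 1; intros u [u_range _]; lra).
  destruct (completeness T T_bounded (ex_intro _ 0 T0)) as [s [s_ub s_lub]].
  assert (s_ge0 : 0 <= s) by exact (s_ub 0 T0).
  assert (s_le1 : s <= 1) by (apply s_lub; intros u [u_range _]; lra).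
  assert (below_s : forall w, 0 <= w < s -> P w).
  { intros w w_range; apply NNPP; intros not_Pw.
    enough (s <= w) by lra.
    apply s_lub; intros u [_ Pu].
    destruct (Rle_or_lt u w) as [|w_lt_u]; [assumption|].
    exfalso; apply not_Pw, Pu; lra. }
  destruct (step s (conj s_ge0 s_le1) below_s) as [e [e_pos beyond_s]].
  assert (s_eq1 : s = 1).
  { destruct (Rle_lt_or_eq_dec s 1 s_le1) as [s_lt1|]; [exfalso | assumption].
    assert (s_lt_min : s < Rmin 1 (s + e)) by (apply Rmin_glb_lt; lra).
    enough (Rmin 1 (s + e) <= s) by lra.
    pose proof (Rmin_l 1 (s + e)); pose proof (Rmin_r 1 (s + e)).
    apply s_ub; split; [lra|]; intros w w_range; apply beyond_s; lra. }
  intros w w_range; apply beyond_s; lra.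
Qed.

Lemma analytic_locally_level a b f v x0 : real_analytic_on a b f ->
  in_interval a b x0 -> level_clusters_at f v x0 ->
  exists rho, 0 < rho /\ forall y, Rabs (y - x0) < rho -> f y = v.
Proof.
  intros f_analytic x0_in clusters.
  destruct (f_analytic x0 x0_in) as [r [c [r_pos expansion]]].
  exists r; split; [exact r_pos|].
  exact (expansion_locally_level f x0 r c r_pos expansion v clusters).
Qed.

Lemma analytic_lipschitz_at a b f x0 : real_analytic_on a b f -> in_interval a b x0 ->
  exists C, 0 < C /\ exists d, 0 < d /\
    forall y, Rabs (y - x0) < d -> Rabs (f y - f x0) <= C * Rabs (y - x0).
Proof.
  intros f_analytic x0_in.
  destruct (f_analytic x0 x0_in) as [r [c [r_pos expansion]]].
  exact (expansion_lipschitz f x0 r c r_pos expansion).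
Qed.

Lemma level_clusters_at_segment f v x1 d s : d <> 0 -> 0 < s ->
  (forall w, 0 <= w < s -> f (x1 + w * d) = v) -> level_clusters_at f v (x1 + s * d).
Proof.
  intros d_ne0 s_pos below_s eps eps_pos.
  assert (d_abs : 0 < Rabs d) by now apply Rabs_pos_lt.
  set (t := Rmin (s / 2) (eps / (2 * Rabs d))).
  assert (t_pos : 0 < t) by (apply Rmin_pos; [lra | apply Rdiv_lt_0_compat; lra]).
  assert (t_le_half : t <= s / 2) by apply Rmin_l.
  assert (t_le : t * Rabs d <= eps / 2).
  { apply Rle_trans with (eps / (2 * Rabs d) * Rabs d).
    - apply Rmult_le_compat_r; [lra | apply Rmin_r].
    - right; field; lra. }
  exists (x1 + (s - t) * d); split.
  - replace (x1 + (s - t) * d - (x1 + s * d)) with (- t * d) by ring.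
    rewrite Rabs_mult, Rabs_Ropp, (Rabs_pos_eq t) by lra; split; [nra | lra].
  - apply below_s; lra.
Qed.

Lemma analytic_level_propagates a b f v x1 : real_analytic_on a b f ->
  in_interval a b x1 -> level_clusters_at f v x1 ->
  forall x2, in_interval a b x2 -> f x2 = v.
Proof.
  intros f_analytic x1_in clusters x2 x2_in.
  set (d := x2 - x1); set (pt := fun w => x1 + w * d).
  destruct (Req_dec d 0) as [d_eq0|d_ne0].
  { destruct (analytic_locally_level a b f v x1 f_analytic x1_in clusters)
      as [rho [rho_pos near]].
    apply near; fold d; rewrite d_eq0, Rabs_R0; exact rho_pos. }
  assert (d_abs : 0 < Rabs d) by now apply Rabs_pos_lt.
  enough (on_segment : forall w, 0 <= w <= 1 -> f (pt w) = v)
    by (replace x2 with (pt 1) by (unfold pt, d; ring); apply on_segment; lra).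
  apply real_induction; intros s s_range below_s.
  assert (clusters_s : level_clusters_at f v (pt s)).
  { destruct (Req_dec s 0) as [->|s_ne0].
    - unfold pt; rewrite Rmult_0_l, Rplus_0_r; exact clusters.
    - apply level_clusters_at_segment; [exact d_ne0 | lra | exact below_s]. }
  assert (pt_in : in_interval a b (pt s)) by (apply in_interval_convex; auto).
  destruct (analytic_locally_level a b f v (pt s) f_analytic pt_in clusters_s)
    as [rho [rho_pos near]].
  exists (rho / (2 * Rabs d)); split; [apply Rdiv_lt_0_compat; lra|].
  intros w w_range; destruct (Rlt_or_le w s) as [w_lt|w_ge]; [apply below_s; lra|].
  apply near; unfold pt; replace (x1 + w * d - (x1 + s * d)) with ((w - s) * d) by ring.
  rewrite Rabs_mult, (Rabs_pos_eq (w - s)) by lra.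
  apply Rle_lt_trans with (rho / (2 * Rabs d) * Rabs d).
  - apply Rmult_le_compat_r; lra.
  - replace (rho / (2 * Rabs d) * Rabs d) with (rho / 2) by (field; lra); lra.
Qed.

Lemma Rpower_pos x y : 0 < Rpower x y.
Proof. apply exp_pos. Qed.

Lemma Rpower_Ropp_le_inv x mu : 1 <= x -> 1 <= mu -> Rpower x (- mu) <= / x.
Proof.
  intros x_ge1 mu_ge1.
  rewrite <- (Rpower_1 x) at 2 by lra; rewrite <- Rpower_Ropp.
  apply Rle_Rpower; lra.
Qed.

Lemma Rpower_Ropp_succ x m : 0 < x -> Rpower x (- (m + 1)) = Rpower x (- m) / x.
Proof.
  intros x_pos; replace (- (m + 1)) with (- m + - (1)) by ring.
  now rewrite Rpower_plus, (Rpower_Ropp x 1), Rpower_1.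
Qed.

Lemma Rinv_lt_of_Rinv_lt d x : 0 < d -> / d < x -> / x < d.
Proof.
  intros d_pos lt; rewrite <- (Rinv_inv d).
  assert (0 < / d) by now apply Rinv_0_lt_compat.
  apply Rinv_lt_contravar; nra.
Qed.

Lemma frac_reduce (y x : Z) : (1 <= x)%Z ->
  exists p q, Z.gcd p q = 1%Z /\ (1 <= q <= x)%Z /\ IZR p / IZR q = IZR y / IZR x.
Proof.
  intros x_pos; set (g := Z.gcd y x).
  assert (g_ne0 : g <> 0%Z) by (intro E; apply Z.gcd_eq_0 in E; lia).
  assert (g_ge0 : (0 <= g)%Z) by apply Z.gcd_nonneg.
  destruct (Z.gcd_divide_l y x) as [ky y_eq], (Z.gcd_divide_r y x) as [kx x_eq].
  fold g in y_eq, x_eq.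
  assert (coprime := Z.gcd_div_gcd y x g g_ne0 eq_refl).
  rewrite y_eq, x_eq, !Z.div_mul in coprime by exact g_ne0.
  exists ky, kx; split; [exact coprime|]; split; [nia|].
  rewrite y_eq, x_eq, !mult_IZR; field.
  split; apply not_0_IZR; nia.
Qed.

Lemma rational_reduce z : is_rational z ->
  exists p q, Z.gcd p q = 1%Z /\ (0 < q)%Z /\ z = IZR p / IZR q.
Proof.
  intros [y [x [x_pos ->]]].
  destruct (frac_reduce y x ltac:(lia)) as [p [q [coprime [q_range eq]]]].
  exists p, q; repeat split; [exact coprime | lia | now symmetry].
Qed.

(* The case q = 0 is covered by Rocq's convention x / 0 = 0. *)
Lemma irrational_neq_frac z p q : ~ is_rational z -> z <> IZR p / IZR q.
Proof.
  intros irr E; apply irr.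
  destruct (Z.lt_trichotomy q 0) as [q_neg|[q_eq0|q_pos]].
  - exists (- p)%Z, (- q)%Z; split; [lia|].
    rewrite E, !opp_IZR; field; apply not_0_IZR; lia.
  - exists 0%Z, 1%Z; split; [lia|].
    rewrite E, q_eq0; unfold Rdiv; rewrite Rinv_0; lra.
  - now exists p, q.
Qed.

Lemma irrational_away_from_Z z : ~ is_rational z ->
  exists d, 0 < d /\ forall k : Z, d <= Rabs (z - IZR k).
Proof.
  intros irr; destruct (archimed z) as [up_gt up_le]; set (u := up z) in *.
  assert (ne : z <> IZR (u - 1)).
  { intro E; apply (irrational_neq_frac z (u - 1) 1 irr); rewrite E; field. }
  rewrite minus_IZR in ne.
  exists (Rmin (IZR u - z) (z - (IZR u - 1))); split; [apply Rmin_pos; lra|].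
  intros k; pose proof (Rmin_l (IZR u - z) (z - (IZR u - 1))).
  pose proof (Rmin_r (IZR u - z) (z - (IZR u - 1))).
  destruct (Z_le_gt_dec u k) as [k_ge|k_lt].
  - apply IZR_le in k_ge; rewrite Rabs_left1 by lra; lra.
  - assert (k_le : (k <= u - 1)%Z) by lia.
    apply IZR_le in k_le; rewrite minus_IZR in k_le.
    rewrite Rabs_pos_eq by lra; lra.
Qed.

Lemma frac_neq_dist a b p q : (0 < b)%Z -> (0 < q)%Z -> IZR a / IZR b <> IZR p / IZR q ->
  / (IZR b * IZR q) <= Rabs (IZR a / IZR b - IZR p / IZR q).
Proof.
  intros b_pos q_pos ne.
  assert (b_pos' : 0 < IZR b) by now apply IZR_lt.
  assert (q_pos' : 0 < IZR q) by now apply IZR_lt.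
  assert (inv_pos : 0 < / (IZR b * IZR q)) by (apply Rinv_0_lt_compat; nra).
  replace (IZR a / IZR b - IZR p / IZR q) with (IZR (a * q - p * b) * / (IZR b * IZR q))
    by (rewrite minus_IZR, !mult_IZR; field; lra).
  rewrite Rabs_mult, (Rabs_pos_eq (/ _)) by lra.
  assert (num_ne0 : (a * q - p * b <> 0)%Z).
  { intro E; apply ne.
    assert (cross : IZR a * IZR q = IZR p * IZR b) by (rewrite <- !mult_IZR; f_equal; lia).
    replace (IZR a / IZR b) with (IZR a * IZR q / (IZR b * IZR q)) by (field; lra).
    rewrite cross; field; lra. }
  assert (num_ge1 : 1 <= Rabs (IZR (a * q - p * b)))
    by (rewrite <- abs_IZR; apply IZR_le; lia).
  nra.
Qed.

Lemma irrational_away_from_list z (l : list (Z * Z)) : ~ is_rational z ->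
  exists d, 0 < d /\ forall yx, In yx l -> d <= Rabs (z - IZR (fst yx) / IZR (snd yx)).
Proof.
  intros irr; induction l as [|yx l [d [d_pos far]]].
  { exists 1; split; [lra | intros _ []]. }
  set (d_yx := Rabs (z - IZR (fst yx) / IZR (snd yx))).
  assert (d_yx_pos : 0 < d_yx).
  { apply Rabs_pos_lt; intro E; apply (irrational_neq_frac z (fst yx) (snd yx) irr); lra. }
  exists (Rmin d d_yx); split; [now apply Rmin_pos|].
  intros yx' [<-|yx'_in].
  - apply Rmin_r.
  - eapply Rle_trans; [apply Rmin_l | now apply far].
Qed.

Definition Zrange (lo : Z) (n : nat) : list Z :=
  map (fun k => (lo + Z.of_nat k)%Z) (seq 0 n).

Lemma in_Zrange lo n k : (lo <= k < lo + Z.of_nat n)%Z -> In k (Zrange lo n).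
Proof.
  intros k_range; apply in_map_iff; exists (Z.to_nat (k - lo)); split; [lia|].
  apply in_seq; lia.
Qed.

(* The approximations with denominator at most N and |z - y/x| <= 1 form a
   finite list, which the Liouville property lets us escape. *)
Lemma Liouville_large_denominator z : Liouville z -> forall mu, 0 < mu -> forall K,
  exists y x : Z, (1 <= x)%Z /\ K < IZR x /\ Rabs (z - IZR y / IZR x) <= Rpower (IZR x) (- mu).
Proof.
  intros [_ approx] mu mu_pos K.
  set (N := Z.to_nat (up K)); set (B := up (Rabs z)).
  destruct (archimed K) as [upK_gt _]; destruct (archimed (Rabs z)) as [B_gt _].
  assert (B_pos : (0 < B)%Z) by (apply lt_IZR; pose proof (Rabs_pos z); fold B in B_gt; lra).
  set (Y := (Z.of_nat N * (B + 1))%Z).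
  destruct (approx mu mu_pos (list_prod (Zrange (- Y) (Z.to_nat (2 * Y + 1))) (Zrange 1 N)))
    as [[y x] [[x_pos close] not_listed]]; simpl in x_pos, close.
  exists y, x; split; [exact x_pos|]; split; [|exact close].
  enough (N_lt_x : (Z.of_nat N < x)%Z).
  { apply IZR_lt in N_lt_x; enough (IZR (up K) <= IZR (Z.of_nat N)) by lra.
    apply IZR_le; unfold N; lia. }
  destruct (Z_lt_le_dec (Z.of_nat N) x) as [|x_le]; [assumption | exfalso].
  apply not_listed, in_prod; [|apply in_Zrange; lia].
  assert (x_ge1 : 1 <= IZR x) by (apply IZR_le; lia).
  assert (pow_le1 : Rpower (IZR x) (- mu) <= 1)
    by (rewrite <- (Rpower_O (IZR x)) by lra; apply Rle_Rpower; lra).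
  assert (y_bound : Rabs (IZR y) <= IZR x * (Rabs z + 1)).
  { replace (IZR y) with (IZR x * (IZR y / IZR x)) by (field; lra).
    rewrite Rabs_mult, (Rabs_pos_eq (IZR x)) by lra.
    apply Rmult_le_compat_l; [lra|].
    pose proof (Rabs_triang_inv (IZR y / IZR x) z).
    rewrite <- Rabs_Ropp, Ropp_minus_distr in close; lra. }
  assert (y_le_Y : Rabs (IZR y) <= IZR Y).
  { unfold Y; rewrite mult_IZR, plus_IZR.
    apply IZR_le in x_le; fold B in B_gt.
    apply Rle_trans with (IZR x * (Rabs z + 1)); [exact y_bound|].
    pose proof (Rabs_pos z); apply Rmult_le_compat; lra. }
  rewrite <- abs_IZR in y_le_Y; apply le_IZR in y_le_Y.
  apply in_Zrange; lia.
Qed.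

Lemma Liouville_reduced_approx z : Liouville z -> forall mu, 1 <= mu -> forall K d, 0 < d ->
  exists x p q : Z, Z.gcd p q = 1%Z /\ (2 <= q <= x)%Z /\ K < IZR x /\
    Rabs (z - IZR p / IZR q) <= Rpower (IZR x) (- mu) /\ Rabs (z - IZR p / IZR q) < d.
Proof.
  intros z_Liouville mu mu_ge1 K d d_pos.
  destruct (irrational_away_from_Z z (proj1 z_Liouville)) as [dZ [dZ_pos far_from_Z]].
  set (d' := Rmin d dZ); assert (d'_pos : 0 < d') by now apply Rmin_pos.
  assert (d'_le : d' <= d /\ d' <= dZ) by (split; [apply Rmin_l | apply Rmin_r]).
  destruct (Liouville_large_denominator z z_Liouville mu ltac:(lra) (Rmax K (/ d')))
    as [y [x [x_pos [x_large close]]]].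
  pose proof (Rmax_l K (/ d')); pose proof (Rmax_r K (/ d')).
  assert (x_ge1 : 1 <= IZR x) by (apply IZR_le; lia).
  assert (very_close : Rabs (z - IZR y / IZR x) < d').
  { eapply Rle_lt_trans; [exact close|].
    eapply Rle_lt_trans; [now apply Rpower_Ropp_le_inv|].
    apply Rinv_lt_of_Rinv_lt; lra. }
  destruct (frac_reduce y x x_pos) as [p [q [coprime [q_range eq]]]].
  rewrite <- eq in close, very_close.
  exists x, p, q; split; [exact coprime|]; repeat split; try lra; try lia.
  destruct (Z.eq_dec q 1) as [q_eq1|]; [exfalso|lia].
  specialize (far_from_Z p); rewrite q_eq1, Rdiv_1_r in very_close; lra.
Qed.

Definition height_bounded (a b : Rbar) (f : R -> R) (e : R) : Prop :=
  forall p q p' q' : Z,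
    Z.gcd p q = 1%Z -> (2 <= q)%Z -> in_interval a b (IZR p / IZR q) ->
    Z.gcd p' q' = 1%Z -> (0 < q')%Z -> f (IZR p / IZR q) = IZR p' / IZR q' ->
    IZR q' <= Rpower (IZR q) e.

Lemma height_bounded_Rmax a b f eta :
  height_bounded a b f eta -> height_bounded a b f (Rmax eta 0).
Proof.
  intros height p q p' q' coprime q_ge2 r_in coprime' q'_pos fr.
  apply Rle_trans with (Rpower (IZR q) eta);
    [exact (height p q p' q' coprime q_ge2 r_in coprime' q'_pos fr)|].
  apply Rle_Rpower; [apply IZR_le; lia | apply Rmax_l].
Qed.

Section Image.

Variables (a b : Rbar) (f : R -> R) (e z : R).
Hypothesis f_analytic : real_analytic_on a b f.
Hypothesis f_rational : forall x, in_interval a b x -> is_rational x -> is_rational (f x).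
Hypothesis e_nonneg : 0 <= e.
Hypothesis f_height : height_bounded a b f e.
Hypothesis z_in : in_interval a b z.
Hypothesis z_Liouville : Liouville z.

Lemma image_approx : exists C, 0 < C /\ forall mu, 1 <= mu -> forall K d, 0 < d ->
  exists (r : R) (x p' q' : Z), r <> z /\ Rabs (r - z) < d /\ K < IZR x /\ 1 <= IZR x /\
    f r = IZR p' / IZR q' /\ (0 < q')%Z /\ IZR q' <= Rpower (IZR x) e /\
    Rabs (f z - IZR p' / IZR q') <= C * Rpower (IZR x) (- mu).
Proof.
  destruct (analytic_lipschitz_at a b f z f_analytic z_in) as [C [C_pos [dL [dL_pos lipschitz]]]].
  destruct (in_interval_open a b z z_in) as [dI [dI_pos near_in]].
  exists C; split; [exact C_pos|]; intros mu mu_ge1 K d d_pos.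
  assert (d'_le : Rmin d (Rmin dL dI) <= d /\ Rmin d (Rmin dL dI) <= dL /\
                  Rmin d (Rmin dL dI) <= dI).
  { pose proof (Rmin_l d (Rmin dL dI)); pose proof (Rmin_r d (Rmin dL dI)).
    pose proof (Rmin_l dL dI); pose proof (Rmin_r dL dI); lra. }
  set (d' := Rmin d (Rmin dL dI)) in *.
  assert (d'_pos : 0 < d') by (repeat apply Rmin_pos; assumption).
  destruct (Liouville_reduced_approx z z_Liouville mu mu_ge1 K d' d'_pos)
    as [x [p [q [coprime [q_range [x_large [close very_close]]]]]]].
  rewrite <- Rabs_Ropp, Ropp_minus_distr in very_close.
  assert (r_in : in_interval a b (IZR p / IZR q)) by (apply near_in; lra).
  assert (r_rational : is_rational (IZR p / IZR q)) by (exists p, q; split; [lia | reflexivity]).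
  destruct (rational_reduce _ (f_rational _ r_in r_rational)) as [p' [q' [coprime' [q'_pos fr]]]].
  assert (q_le_x : 2 <= IZR q <= IZR x) by (split; apply IZR_le; lia).
  exists (IZR p / IZR q), x, p', q'; repeat split; try lra; try assumption.
  - apply not_eq_sym, irrational_neq_frac, (proj1 z_Liouville).
  - apply Rle_trans with (Rpower (IZR q) e); [now apply (f_height p q p' q')|].
    apply Rle_Rpower_l; lra.
  - rewrite <- fr, <- Rabs_Ropp, Ropp_minus_distr.
    eapply Rle_trans; [apply lipschitz; lra|].
    apply Rmult_le_compat_l; [lra|].
    now rewrite <- Rabs_Ropp, Ropp_minus_distr.
Qed.

Lemma image_rational_const : is_rational (f z) -> forall x, in_interval a b x -> f x = f z.
Proof.
  intros fz_rational.
  destruct (rational_reduce _ fz_rational) as [A [B [_ [B_pos fz]]]].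
  assert (B_pos' : 0 < IZR B) by now apply IZR_lt.
  destruct image_approx as [C [C_pos approx]].
  apply (analytic_level_propagates a b f (f z) z f_analytic z_in).
  intros d d_pos.
  destruct (approx (e + 1) ltac:(lra) (C * IZR B) d d_pos)
    as [r [x [p' [q' [r_ne [r_close [x_large [x_ge1 [fr [q'_pos [q'_le close]]]]]]]]]]].
  exists r; split; [split; [apply Rabs_pos_lt; lra | exact r_close]|].
  destruct (Req_dec (f r) (f z)) as [|ne]; [assumption | exfalso].
  rewrite fr, fz in ne; apply not_eq_sym in ne.
  pose proof (frac_neq_dist A B p' q' B_pos q'_pos ne) as far; rewrite <- fz in far.
  rewrite Rpower_Ropp_succ, Rpower_Ropp in close by lra.
  set (P := Rpower (IZR x) e) in *.
  assert (P_pos : 0 < P) by apply Rpower_pos.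
  assert (q'_pos' : 0 < IZR q') by now apply IZR_lt.
  assert (far' : / (IZR B * P) <= / (IZR B * IZR q'))
    by (apply Rinv_le_contravar; [nra | apply Rmult_le_compat_l; lra]).
  enough (C * (/ P / IZR x) < / (IZR B * P)) by lra.
  replace (C * (/ P / IZR x)) with ((C * IZR B / IZR x) * / (IZR B * P)) by (field; lra).
  rewrite <- (Rmult_1_l (/ (IZR B * P))) at 2.
  apply Rmult_lt_compat_r; [apply Rinv_0_lt_compat; nra|].
  apply (Rmult_lt_reg_r (IZR x)); [lra|].
  replace (C * IZR B / IZR x * IZR x) with (C * IZR B) by (field; lra); lra.
Qed.

Lemma image_Liouville_approx : ~ is_rational (f z) -> forall eps, 0 < eps ->
  infinitely_many (fun yx : Z * Z =>
    (1 <= snd yx)%Z /\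
    Rabs (f z - IZR (fst yx) / IZR (snd yx)) <= Rpower (IZR (snd yx)) (- eps)).
Proof.
  intros fz_irrational eps eps_pos l.
  destruct (irrational_away_from_list (f z) l fz_irrational) as [dl [dl_pos far]].
  destruct image_approx as [C [C_pos approx]].
  assert (mu_ge1 : 1 <= eps * e + 1) by nra.
  destruct (approx (eps * e + 1) mu_ge1 (Rmax C (C / dl)) 1 Rlt_0_1)
    as [r [x [p' [q' [_ [_ [x_large [x_ge1 [_ [q'_pos [q'_le close]]]]]]]]]]].
  pose proof (Rmax_l C (C / dl)); pose proof (Rmax_r C (C / dl)).
  rewrite Rpower_Ropp_succ in close by lra.
  set (P := Rpower (IZR x) (- (eps * e))) in *.
  assert (P_pos : 0 < P) by apply Rpower_pos.
  assert (C_div_x : C / IZR x < 1 /\ C / IZR x < dl).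
  { split; apply (Rmult_lt_reg_r (IZR x)); try lra;
      replace (C / IZR x * IZR x) with C by (field; lra).
    - lra.
    - apply (Rmult_lt_reg_r (/ dl)); [now apply Rinv_0_lt_compat|].
      replace (dl * IZR x * / dl) with (IZR x) by (field; lra); unfold Rdiv in *; lra. }
  assert (close' : Rabs (f z - IZR p' / IZR q') < Rmin 1 dl * P).
  { replace (C * (P / IZR x)) with (C / IZR x * P) in close by (field; lra).
    eapply Rle_lt_trans; [exact close|].
    apply Rmult_lt_compat_r; [exact P_pos|]; now apply Rmin_glb_lt. }
  exists (p', q'); simpl; split; [split; [lia|]|].
  - assert (P_le : P <= Rpower (IZR q') (- eps)).
    { unfold P; rewrite !Rpower_Ropp; apply Rinv_le_contravar; [apply Rpower_pos|].
      rewrite Rmult_comm, <- Rpower_mult; apply Rle_Rpower_l; [lra|].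
      split; [apply IZR_lt; lia | exact q'_le]. }
    pose proof (Rmin_l 1 dl); nra.
  - intro listed; specialize (far _ listed); simpl in far.
    assert (P_le1 : P <= 1).
    { unfold P; rewrite <- (Rpower_O (IZR x)) by lra; apply Rle_Rpower; nra. }
    pose proof (Rmin_r 1 dl); nra.
Qed.

End Image.

Theorem corollary2p2 (a b : Rbar) (f : R -> R) :
  Rbar_lt a b ->
  real_analytic_on a b f ->
  (exists x y, in_interval a b x /\ in_interval a b y /\ f x <> f y) ->
  (forall x, in_interval a b x -> is_rational x -> is_rational (f x)) ->
  (exists eta : R,
     forall p q p' q' : Z,
       Z.gcd p q = 1%Z -> (2 <= q)%Z ->
       in_interval a b (IZR p / IZR q) ->
       Z.gcd p' q' = 1%Z -> (0 < q')%Z ->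
       f (IZR p / IZR q) = IZR p' / IZR q' ->
       IZR q' <= Rpower (IZR q) eta) ->
  forall zeta, in_interval a b zeta -> Liouville zeta -> Liouville (f zeta).
Proof.
  intros _ f_analytic [x1 [x2 [x1_in [x2_in f_nonconst]]]] f_rational [eta height]
    z z_in z_Liouville.
  pose proof (height_bounded_Rmax a b f eta height) as height_e.
  pose proof (Rmax_r eta 0) as e_nonneg.
  assert (fz_irrational : ~ is_rational (f z)).
  { intro fz_rational; apply f_nonconst.
    pose proof (image_rational_const a b f _ z f_analytic f_rational e_nonneg
                  height_e z_in z_Liouville fz_rational) as f_const.
    now rewrite (f_const x1 x1_in), (f_const x2 x2_in). }
  split; [exact fz_irrational|].
  exact (image_Liouville_approx a b f _ z f_analytic f_rational e_nonneg
           height_e z_in z_Liouville fz_irrational).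
Qed.
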